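(* Let $f:X\to X$ be a continuous map on a metric space $(X,d)$. The following are equivalent: (i) $\operatorname{Per}(\overline f)$ is dense in $(\mathcal{K}(X),d_H)$; (ii) $\operatorname{Per}(\hat f)$ is dense in $\mathcal{F}_\infty(X)$; (iii) $\operatorname{Per}(\hat f)$ is dense in $\mathcal{F}_0(X)$; (iv) $\operatorname{Per}(\hat f)$ is dense in $\mathcal{F}_S(X)$; (v) $\operatorname{Per}(\hat f)$ is dense in $\mathcal{F}_E(X)$.
   Context: For a map $g:Y\to Y$, $\operatorname{Per}(g)=\{y\in Y:g^p(y)=y$ for some $p\in\mathbb{N}\}$ is the set of periodic points. $\mathbb{I}=[0,1]$. Fuzzy setting: for $u:X\to\mathbb{I}$, $u_\alpha=\{x:u(x)\ge\alpha\}$ ($\alpha\in]0,1]$), $u_0=\overline{\{x:u(x)>0\}}$. $\mathcal{F}(X)$: upper-semicontinuous $u:X\to\mathbb{I}$ with $u_0$ compact and $u_1\ne\varnothing$. $\mathcal{K}(X)$: non-empty compact subsets with Hausdorff metric $d_H(A,B)=\max\{\sup_{a\in A}d(a,B),\sup_{b\in B}d(b,A)\}$; $\overline f(K)=f(K)$. Zadeh extension: $\hat f(u)(x)=\sup\{u(y):f(y)=x\}$ (and $0$ if $f^{-1}(\{x\})=\varnothing$). Metrics on $\mathcal{F}(X)$: $d_\infty(u,v)=\sup_{\alpha\in\mathbb{I}}d_H(u_\alpha,v_\alpha)$; $d_0(u,v)=\inf\{\varepsilon>0:\exists\xi\in\mathcal{T},\ \sup_\alpha|\xi(\alpha)-\alpha|\le\varepsilon,\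 d_\infty(u,\xi\circ v)\le\varepsilon\}$ with $\mathcal{T}$ the strictly increasing homeomorphisms of $\mathbb{I}$; with $\overline d((x,\alpha),(y,\beta))=\max\{d(x,y),|\alpha-\beta|\}$, $\operatorname{end}(u)=\{(x,\alpha):u(x)\ge\alpha\}$, $\operatorname{send}(u)=\operatorname{end}(u)\cap(u_0\times\mathbb{I})$, $d_E$ and $d_S$ are the $\overline d$-Hausdorff distances of endographs and sendographs respectively. $\mathcal{F}_\rho(X)$ denotes $(\mathcal{F}(X),\rho)$. *)

From Stdlib Require Import Reals.
From Coquelicot Require Import Coquelicot.
Open Scope R_scope.

Definition is_metric {X : Type} (d : X -> X -> R) : Prop :=
  (forall x y, 0 <= d x y) /\ (forall x y, d x y = 0 <-> x = y) /\
  (forall x y, d x y = d y x) /\ (forall x y z, d x z <= d x y + d y z).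

Definition continuous_map {X : Type} (d : X -> X -> R) (f : X -> X) : Prop :=
  forall x eps, 0 < eps -> exists delta, 0 < delta /\
    forall y, d x y < delta -> d (f x) (f y) < eps.

Definition d_open {X : Type} (d : X -> X -> R) (U : X -> Prop) : Prop :=
  forall x, U x -> exists e, 0 < e /\ forall y, d x y < e -> U y.

Definition d_compact {X : Type} (d : X -> X -> R) (K : X -> Prop) : Prop :=
  forall (I : Type) (U : I -> X -> Prop),
    (forall i, d_open d (U i)) -> (forall x, K x -> exists i, U i x) ->
    exists l : list I, forall x, K x -> exists i, List.In i l /\ U i x.

Definition d_closure {X : Type} (d : X -> X -> R) (S : X -> Prop) : X -> Prop :=
  fun x => forall e, 0 < e -> exists y, S y /\ d x y < e.

Definition in_KX {X : Type} (d : X -> X -> R) (K : X -> Prop) : Prop :=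
  (exists x, K x) /\ d_compact d K.

Definition Rbar_maxi (a b : Rbar) : Rbar := if Rbar_le_dec a b then b else a.

Definition dist_set {Y : Type} (dY : Y -> Y -> R) (a : Y) (B : Y -> Prop) : Rbar :=
  Rbar_glb (fun r => exists b, B b /\ r = Finite (dY a b)).

Definition excess {Y : Type} (dY : Y -> Y -> R) (A B : Y -> Prop) : Rbar :=
  Rbar_lub (fun r => exists a, A a /\ r = dist_set dY a B).

Definition dH {Y : Type} (dY : Y -> Y -> R) (A B : Y -> Prop) : Rbar :=
  Rbar_maxi (excess dY A B) (excess dY B A).

Definition image {X : Type} (f : X -> X) (A : X -> Prop) : X -> Prop :=
  fun x => exists y, A y /\ f y = x.

Definition unitI (a : R) : Prop := 0 <= a <= 1.

Definition level {X : Type} (d : X -> X -> R) (u : X -> R) (a : R) : X -> Prop :=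
  fun x => (0 < a -> a <= u x) /\ (a <= 0 -> d_closure d (fun y => 0 < u y) x).

Definition usc {X : Type} (d : X -> X -> R) (u : X -> R) : Prop :=
  forall x r, u x < r -> exists delta, 0 < delta /\
    forall y, d x y < delta -> u y < r.

Definition in_FX {X : Type} (d : X -> X -> R) (u : X -> R) : Prop :=
  (forall x, unitI (u x)) /\ usc d u /\ d_compact d (level d u 0) /\
  (exists x, level d u 1 x).

(** Zadeh extension: sup {u y : f y = x}; for an empty preimage the sup
    in Rbar is m_infty and [real m_infty = 0], giving the convention 0. *)
Definition zadeh {X : Type} (f : X -> X) (u : X -> R) : X -> R :=
  fun x => real (Rbar_lub (fun r => exists y, f y = x /\ r = Finite (u y))).

Definition d_inf {X : Type} (d : X -> X -> R) (u v : X -> R) : Rbar :=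
  Rbar_lub (fun r => exists a, unitI a /\ r = dH d (level d u a) (level d v a)).

Definition cont_on_I (g : R -> R) : Prop :=
  forall a eps, unitI a -> 0 < eps -> exists delta, 0 < delta /\
    forall b, unitI b -> Rabs (b - a) < delta -> Rabs (g b - g a) < eps.

Definition in_T (xi : R -> R) : Prop :=
  (forall a b, unitI a -> unitI b -> a < b -> xi a < xi b) /\
  (forall a, unitI a -> unitI (xi a)) /\
  (exists g : R -> R, (forall b, unitI b -> unitI (g b)) /\
     (forall a, unitI a -> g (xi a) = a) /\ (forall b, unitI b -> xi (g b) = b) /\
     cont_on_I xi /\ cont_on_I g).

Definition d_0 {X : Type} (d : X -> X -> R) (u v : X -> R) : Rbar :=
  Rbar_glb (fun e => exists eps, e = Finite eps /\ 0 < eps /\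
    exists xi, in_T xi /\ (forall a, unitI a -> Rabs (xi a - a) <= eps) /\
      Rbar_le (d_inf d u (fun x => xi (v x))) (Finite eps)).

Definition dbar {X : Type} (d : X -> X -> R) (p q : X * R) : R :=
  Rmax (d (fst p) (fst q)) (Rabs (snd p - snd q)).

Definition endo {X : Type} (u : X -> R) : X * R -> Prop :=
  fun p => unitI (snd p) /\ snd p <= u (fst p).

Definition sendo {X : Type} (d : X -> X -> R) (u : X -> R) : X * R -> Prop :=
  fun p => endo u p /\ level d u 0 (fst p).

Definition d_E {X : Type} (d : X -> X -> R) (u v : X -> R) : Rbar :=
  dH (dbar d) (endo u) (endo v).

Definition d_S {X : Type} (d : X -> X -> R) (u v : X -> R) : Rbar :=
  dH (dbar d) (sendo d u) (sendo d v).

Definition per_set {X : Type} (f : X -> X) (K : X -> Prop) : Prop :=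
  exists p : nat, (1 <= p)%nat /\ forall x, Nat.iter p (image f) K x <-> K x.

Definition per_fuzzy {X : Type} (f : X -> X) (u : X -> R) : Prop :=
  exists p : nat, (1 <= p)%nat /\ Nat.iter p (zadeh f) u = u.

Definition dense_per_K {X : Type} (d : X -> X -> R) (f : X -> X) : Prop :=
  forall K, in_KX d K -> forall eps, 0 < eps ->
    exists L, in_KX d L /\ per_set f L /\ Rbar_lt (dH d K L) (Finite eps).

Definition dense_per_F {X : Type} (d : X -> X -> R) (f : X -> X)
  (rho : (X -> R) -> (X -> R) -> Rbar) : Prop :=
  forall u, in_FX d u -> forall eps, 0 < eps ->
    exists v, in_FX d v /\ per_fuzzy f v /\ Rbar_lt (rho u v) (Finite eps).

From Stdlib Require Import Reals Lra Lia List ClassicalEpsilon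
  FunctionalExtensionality PropExtensionality.
From Coquelicot Require Import Coquelicot.
Open Scope R_scope.
Set Implicit Arguments.
Unset Strict Implicit.

(** If periodic compact sets are dense, approximate a fuzzy set [u] as follows:
    cover its compact support by finitely many [r]-balls; on each ball the
    maximum of [u] is attained (upper semicontinuity) at some [y], and [{y}] is
    replaced by a nearby periodic compact set.  The maximum [v] of the resulting
    weighted indicators is periodic (take a common period), and every level set
    of [v] is within [4r] of the corresponding level set of [u], which bounds
    all four metrics.
    Conversely, approximate the indicator of a compact [K] by a periodic fuzzy
    set [v].  For [b > 0], continuity of [f] and compactness of supports make
    the [b]-level set of the [n]-th Zadeh iterate of [v] the image of [v_b]
    under [f^n], so the level sets of [v] are periodic compact sets; and the
    metrics force [v_1] (for [d_inf], [d_0]) or [v_(1/2)] (for [d_S], [d_E])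
    to be close to [K]. *)

Lemma Rbar_lub_ub (E : Rbar -> Prop) x : E x -> Rbar_le x (Rbar_lub E).
Proof. intros Ex. exact (proj1 (proj2_sig (Rbar_ex_lub E)) x Ex). Qed.

Lemma Rbar_lub_le (E : Rbar -> Prop) b :
  (forall x, E x -> Rbar_le x b) -> Rbar_le (Rbar_lub E) b.
Proof. intros Hb. exact (proj2 (proj2_sig (Rbar_ex_lub E)) b Hb). Qed.

Lemma Rbar_glb_lb (E : Rbar -> Prop) x : E x -> Rbar_le (Rbar_glb E) x.
Proof. intros Ex. exact (proj1 (proj2_sig (Rbar_ex_glb E)) x Ex). Qed.

Lemma Rbar_glb_ge (E : Rbar -> Prop) b :
  (forall x, E x -> Rbar_le b x) -> Rbar_le b (Rbar_glb E).
Proof. intros Hb. exact (proj2 (proj2_sig (Rbar_ex_glb E)) b Hb). Qed.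

Lemma Rbar_glb_lt (E : Rbar -> Prop) b :
  Rbar_lt (Rbar_glb E) b -> exists x, E x /\ Rbar_lt x b.
Proof.
  intros Hlt. apply NNPP. intros Hn.
  apply (Rbar_lt_not_le _ _ Hlt), Rbar_glb_ge. intros x Ex.
  apply Rbar_not_lt_le. intros Hx. apply Hn. now exists x.
Qed.

Lemma Rbar_maxi_ge a b : Rbar_le a (Rbar_maxi a b) /\ Rbar_le b (Rbar_maxi a b).
Proof.
  unfold Rbar_maxi. destruct Rbar_le_dec as [h|h]; split; try easy; try apply Rbar_le_refl.
  now apply Rbar_lt_le, Rbar_not_le_lt.
Qed.

Section Hausdorff.

Variables (Y : Type) (dY : Y -> Y -> R).

Definition mutually_close (A B : Y -> Prop) (e : R) : Prop :=
  (forall a, A a -> exists b, B b /\ dY a b <= e) /\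
  (forall b, B b -> exists a, A a /\ dY b a <= e).

Lemma mutually_close_sym A B e : mutually_close A B e -> mutually_close B A e.
Proof. now intros [H1 H2]. Qed.

Lemma mutually_close_mono A B e e' :
  e <= e' -> mutually_close A B e -> mutually_close A B e'.
Proof.
  intros Hee' [H1 H2]. split.
  - intros a Aa. destruct (H1 a Aa) as [b [Bb Hab]]. exists b. split; [exact Bb | lra].
  - intros b Bb. destruct (H2 b Bb) as [a [Aa Hba]]. exists a. split; [exact Aa | lra].
Qed.

Lemma excess_le A B e :
  (forall a, A a -> exists b, B b /\ dY a b <= e) -> Rbar_le (excess dY A B) (Finite e).
Proof.
  intros H. apply Rbar_lub_le. intros r [a [Aa ->]].
  destruct (H a Aa) as [b [Bb Hab]].
  apply Rbar_le_trans with (Finite (dY a b)); [|exact Hab].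
  apply Rbar_glb_lb. now exists b.
Qed.

Lemma dH_le A B e : mutually_close A B e -> Rbar_le (dH dY A B) (Finite e).
Proof.
  intros [H1 H2]. unfold dH, Rbar_maxi. destruct Rbar_le_dec; now apply excess_le.
Qed.

Lemma excess_lt A B e : Rbar_lt (excess dY A B) (Finite e) ->
  forall a, A a -> exists b, B b /\ dY a b <= e.
Proof.
  intros Hlt a Aa.
  assert (Hd : Rbar_lt (dist_set dY a B) (Finite e)).
  { eapply Rbar_le_lt_trans; [|exact Hlt]. apply Rbar_lub_ub. now exists a. }
  destruct (Rbar_glb_lt Hd) as [r [[b [Bb ->]] Hr]].
  exists b. split; [exact Bb | now apply Rlt_le].
Qed.

Lemma dH_lt A B e : Rbar_lt (dH dY A B) (Finite e) -> mutually_close A B e.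
Proof.
  intros Hlt. destruct (Rbar_maxi_ge (excess dY A B) (excess dY B A)) as [h1 h2].
  split; apply excess_lt; eapply Rbar_le_lt_trans; eauto.
Qed.

End Hausdorff.

Section MetricSpace.

Variables (X : Type) (d : X -> X -> R).
Hypothesis hd : is_metric d.

Lemma d_nonneg x y : 0 <= d x y. Proof. apply hd. Qed.
Lemma d_refl x : d x x = 0. Proof. now apply hd. Qed.
Lemma d_sym x y : d x y = d y x. Proof. apply hd. Qed.
Lemma d_triangle x y z : d x z <= d x y + d y z. Proof. apply hd. Qed.

Lemma d_pos x y : x <> y -> 0 < d x y.
Proof.
  intros Hxy. destruct (d_nonneg x y) as [h|h]; [exact h|].
  exfalso. apply Hxy. now apply hd.
Qed.

Lemma ball_open c r : d_open d (fun x => d c x < r).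
Proof.
  intros y Hy. exists (r - d c y). split; [lra|].
  intros z Hz. pose proof (d_triangle c y z). lra.
Qed.

Definition d_closed (F : X -> Prop) : Prop :=
  forall x, ~ F x -> exists e, 0 < e /\ forall y, d x y < e -> ~ F y.

Lemma closed_ball_closed c r : d_closed (fun x => d c x <= r).
Proof.
  intros y Hy. apply Rnot_le_lt in Hy. exists (d c y - r). split; [lra|].
  intros z Hz Hcz. pose proof (d_triangle c z y). rewrite (d_sym z y) in *. lra.
Qed.

(** The sets [{y | 1/(n+1) < d x y}] cover [K] and are nested, so finitely many
    of them cover it and the largest index gives a ball around [x] missing [K]. *)
Lemma compact_closed K : d_compact d K -> d_closed K.
Proof.
  intros HK x Kx.
  destruct (HK nat (fun n y => / INR (S n) < d x y)) as [l Hl].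
  - intros n y Hy. exists (d x y - / INR (S n)). split; [lra|].
    intros z Hz. pose proof (d_triangle x z y). rewrite (d_sym z y) in *. lra.
  - intros y Ky. assert (Hxy : x <> y) by (intros ->; auto).
    destruct (archimed_cor1 (d x y) (d_pos Hxy)) as [N [HN HN0]].
    exists (pred N). now replace (S (pred N)) with N by lia.
  - exists (/ INR (S (list_max l))). split; [apply Rinv_0_lt_compat, lt_0_INR; lia|].
    intros y Hy Ky. destruct (Hl y Ky) as [n [Hn Hd]].
    assert (Hmax : (n <= list_max l)%nat).
    { apply (proj1 (Forall_forall _ l) (proj1 (list_max_le l _) (le_n _)) n Hn). }
    assert (/ INR (S (list_max l)) <= / INR (S n)).
    { apply Rinv_le_contravar; [apply lt_0_INR; lia | apply le_INR; lia]. }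
    lra.
Qed.

Lemma compact_ext A B : (forall x, A x <-> B x) -> d_compact d A -> d_compact d B.
Proof.
  intros HAB HA I U HU HcB. destruct (HA I U HU) as [l Hl].
  - intros x Ax. now apply HcB, HAB.
  - exists l. intros x Bx. now apply Hl, HAB.
Qed.

Lemma compact_inter_closed K F :
  d_compact d K -> d_closed F -> d_compact d (fun x => K x /\ F x).
Proof.
  intros HK HF I U HU Hc.
  destruct (HK (option I) (fun o y => match o with Some i => U i y | None => ~ F y end))
    as [l Hl].
  - intros [i|]; [apply HU | exact HF].
  - intros y Ky. destruct (classic (F y)) as [Fy|Fy].
    + destruct (Hc y (conj Ky Fy)) as [i Hi]. now exists (Some i).
    + now exists None.
  - exists (flat_map (fun o => match o with Some i => i :: nil | None => nil end) l).
    intros y [Ky Fy]. destruct (Hl y Ky) as [[i|] [Hi Hy]]; [|easy].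
    exists i. split; [|exact Hy]. apply in_flat_map. exists (Some i). simpl; auto.
Qed.

Lemma compact_empty : d_compact d (fun _ => False).
Proof. intros I U _ _. now exists nil. Qed.

Lemma compact_singleton y : d_compact d (fun x => x = y).
Proof.
  intros I U _ Hc. destruct (Hc y eq_refl) as [i Hi].
  exists (i :: nil). intros x ->. exists i. simpl; auto.
Qed.

Lemma singleton_in_KX y : in_KX d (fun x => x = y).
Proof. split; [now exists y | apply compact_singleton]. Qed.

Lemma compact_union A B :
  d_compact d A -> d_compact d B -> d_compact d (fun x => A x \/ B x).
Proof.
  intros HA HB I U HU Hc.
  destruct (HA I U HU) as [l1 H1]; [intros x Ax; apply Hc; auto|].
  destruct (HB I U HU) as [l2 H2]; [intros x Bx; apply Hc; auto|].
  exists (l1 ++ l2). intros x [Ax|Bx].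
  - destruct (H1 x Ax) as [i [Hi Hx]]. exists i. split; [apply in_or_app|]; auto.
  - destruct (H2 x Bx) as [i [Hi Hx]]. exists i. split; [apply in_or_app|]; auto.
Qed.

Lemma compact_list_union {I : Type} (l : list I) (Q : I -> Prop) (K : I -> X -> Prop) :
  (forall i, In i l -> d_compact d (K i)) ->
  d_compact d (fun x => exists i, In i l /\ Q i /\ K i x).
Proof.
  induction l as [|j l IH]; intros Hc.
  - eapply compact_ext; [|apply compact_empty]. intros x. split; [easy|].
    now intros [i [[] _]].
  - assert (Hj : d_compact d (fun x => Q j /\ K j x)).
    { destruct (classic (Q j)) as [h|h].
      - eapply compact_ext; [|apply (Hc j (or_introl eq_refl))]. intros x; tauto.
      - eapply compact_ext; [|apply compact_empty]. intros x; tauto. }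
    eapply compact_ext; [|apply (compact_union Hj (IH (fun i Hi => Hc i (or_intror Hi))))].
    intros x. split.
    + intros [[Qj Kj] | [i [Hi HQK]]]; [exists j | exists i]; simpl; auto.
    + intros [i [[<- | Hi] HQK]]; [left | right; exists i]; auto.
Qed.

Lemma list_argmax {A : Type} (g : A -> R) (l : list A) :
  l <> nil -> exists a, In a l /\ forall b, In b l -> g b <= g a.
Proof.
  induction l as [|a l IH]; intros Hne; [easy|].
  destruct l as [|a' l'].
  - exists a. split; [simpl; auto|]. intros b [<-|[]]. lra.
  - destruct (IH ltac:(easy)) as [m [Hm Hmax]].
    destruct (Rle_dec (g m) (g a)) as [h|h].
    + exists a. split; [simpl; auto|]. intros b [<-|Hb]; [lra|]. specialize (Hmax b Hb). lra.
    + exists m. split; [simpl; auto|]. intros b [<-|Hb]; [lra|auto].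
Qed.

(** If no maximum existed, the open sets [{w | u w < u y}], [y] in [K], would
    cover [K]; the best index of a finite subcover would beat itself. *)
Lemma usc_attains_max u K : usc d u -> d_compact d K -> (exists x, K x) ->
  exists y, K y /\ forall z, K z -> u z <= u y.
Proof.
  intros Hu HK [x0 Kx0]. apply NNPP. intros Hnomax.
  destruct (HK {y | K y} (fun y w => u w < u (proj1_sig y))) as [l Hl].
  - intros [y Ky] w Hw. exact (Hu w (u y) Hw).
  - intros w Kw. apply NNPP. intros Hn. apply Hnomax. exists w. split; [exact Kw|].
    intros z Kz. apply Rnot_lt_le. intros Hlt. apply Hn. now exists (exist _ z Kz).
  - assert (Hne : l <> nil) by (destruct (Hl x0 Kx0) as [i [Hi _]]; now intros ->).
    destruct (list_argmax (fun y => u (proj1_sig y)) Hne) as [[m Km] [Hm Hmax]].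
    destruct (Hl m Km) as [i [Hi Hlt]]. specialize (Hmax i Hi). simpl in *. lra.
Qed.

Lemma level_pos_iff u a x : 0 < a -> (level d u a x <-> a <= u x).
Proof. intros Ha. unfold level. split; [now intros [h _]; auto | split; auto; lra]. Qed.

Lemma support_of_pos u x : 0 < u x -> level d u 0 x.
Proof. intros Hx. split; [lra|]. intros _ e He. exists x. now rewrite d_refl. Qed.

Lemma support_of_level u a x : 0 < a -> level d u a x -> level d u 0 x.
Proof. intros Ha Hx. apply support_of_pos. apply level_pos_iff in Hx; lra. Qed.

End MetricSpace.

Lemma nonneg_eq_of_levels {X : Type} (u w : X -> R) :
  (forall x, 0 <= u x) -> (forall x, 0 <= w x) ->
  (forall x b, 0 < b -> (b <= u x <-> b <= w x)) -> u = w.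
Proof.
  intros Hu Hw Hlev. apply functional_extensionality. intros x.
  apply Rle_antisym; apply Rnot_lt_le; intros Hlt.
  - assert (u x <= w x) by (apply (Hlev x (u x)); [pose proof (Hw x); lra | lra]). lra.
  - assert (w x <= u x) by (apply (Hlev x (w x)); [pose proof (Hu x); lra | lra]). lra.
Qed.

Section Iterates.

Variables (X : Type) (g : X -> X).

Lemma iter_image_iff n (A : X -> Prop) x :
  Nat.iter n (image g) A x <-> exists y, A y /\ Nat.iter n g y = x.
Proof.
  revert x. induction n as [|n IH]; intros x; simpl.
  - split; [intros h; now exists x | now intros [y [h ->]]].
  - split.
    + intros [z [Hz <-]]. apply IH in Hz. destruct Hz as [y [Hy <-]]. now exists y.
    + intros [y [Hy <-]]. exists (Nat.iter n g y). split; [apply IH; now exists y | easy].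
Qed.

Lemma per_set_mult p L : (forall x, Nat.iter p (image g) L x <-> L x) ->
  forall k x, Nat.iter (k * p) (image g) L x <-> L x.
Proof.
  intros Hp k. induction k as [|k IH]; intros x; [simpl; tauto|].
  simpl. rewrite Nat.iter_add, iter_image_iff. split.
  - intros [y [Hy <-]]. apply Hp, iter_image_iff. exists y. split; [apply IH|]; easy.
  - intros Lx. apply Hp, iter_image_iff in Lx. destruct Lx as [y [Ly <-]].
    exists y. split; [apply IH|]; easy.
Qed.

Lemma common_period (Ls : list (X -> Prop)) : (forall L, In L Ls -> per_set g L) ->
  exists P, (1 <= P)%nat /\
    forall L, In L Ls -> forall x, Nat.iter P (image g) L x <-> L x.
Proof.
  induction Ls as [|L0 Ls IH]; intros Hper.
  - exists 1%nat. split; [lia | easy].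
  - destruct (IH (fun L HL => Hper L (or_intror HL))) as [P [HP HPer]].
    destruct (Hper L0 (or_introl eq_refl)) as [p [Hp Hp0]].
    exists (P * p)%nat. split; [nia|].
    intros L [<- | HL] x; [now apply per_set_mult|].
    rewrite Nat.mul_comm. now apply per_set_mult, HPer.
Qed.

End Iterates.

Lemma zadeh_nil {X : Type} (g : X -> X) w x : ~ (exists y, g y = x) -> zadeh g w x = 0.
Proof.
  intros Hn. unfold zadeh.
  assert (H : Rbar_le (Rbar_lub (fun r => exists y, g y = x /\ r = Finite (w y))) m_infty).
  { apply Rbar_lub_le. intros r [y [Hy _]]. exfalso. apply Hn. now exists y. }
  destruct Rbar_lub; easy.
Qed.

Lemma zadeh_sup {X : Type} (g : X -> X) w x y0 : (forall y, w y <= 1) -> g y0 = x ->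
  (forall y, g y = x -> w y <= zadeh g w x) /\
  (forall b, (forall y, g y = x -> w y <= b) -> zadeh g w x <= b).
Proof.
  intros Hw1 Hy0. unfold zadeh.
  set (E := fun r => exists y, g y = x /\ r = Finite (w y)).
  assert (Hub : forall y, g y = x -> Rbar_le (w y) (Rbar_lub E)).
  { intros y Hy. apply Rbar_lub_ub. now exists y. }
  assert (Hle : forall b : Rbar, (forall y, g y = x -> Rbar_le (w y) b) ->
                  Rbar_le (Rbar_lub E) b).
  { intros b Hb. apply Rbar_lub_le. intros r [y [Hy ->]]. now apply Hb. }
  assert (H1 : Rbar_le (Rbar_lub E) 1) by (apply Hle; intros y _; apply Hw1).
  pose proof (Hub y0 Hy0) as Hy0ub.
  destruct (Rbar_lub E) as [a| |]; try easy.
  split; [exact Hub | intros b Hb; exact (Hle (Finite b) Hb)].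
Qed.

Lemma zadeh_unit {X : Type} (g : X -> X) w x :
  (forall y, 0 <= w y <= 1) -> 0 <= zadeh g w x <= 1.
Proof.
  intros Hw. destruct (classic (exists y, g y = x)) as [[y0 Hy0]|Hn].
  - destruct (@zadeh_sup _ g w x y0) as [Hub Hle]; [intros y; apply Hw | exact Hy0|].
    specialize (Hub y0 Hy0). pose proof (Hw y0).
    assert (zadeh g w x <= 1) by (apply Hle; intros y _; apply Hw). lra.
  - rewrite (zadeh_nil w Hn). lra.
Qed.

Lemma zadeh_ge_iff {X : Type} (g : X -> X) w x b :
  (forall y, 0 <= w y <= 1) -> 0 < b ->
  ((forall y, g y = x -> w y < b) ->
     exists b', b' < b /\ forall y, g y = x -> w y <= b') ->
  (b <= zadeh g w x <-> exists y, g y = x /\ b <= w y).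
Proof.
  intros Hw Hb Hgap. destruct (classic (exists y, g y = x)) as [[y0 Hy0]|Hn].
  - destruct (@zadeh_sup _ g w x y0) as [Hub Hle]; [intros y; apply Hw | exact Hy0|].
    split.
    + intros Hbz. apply NNPP. intros Hno. destruct Hgap as [b' [Hb' Hbd]].
      { intros y Hy. apply Rnot_le_lt. intros Hby. apply Hno. now exists y. }
      specialize (Hle b' Hbd). lra.
    + intros [y [Hy Hby]]. specialize (Hub y Hy). lra.
  - rewrite (zadeh_nil w Hn). split; [lra|]. intros [y [Hy _]]. exfalso. eauto.
Qed.

Section ZadehLevels.

Variables (X : Type) (d : X -> X -> R) (f : X -> X).
Hypotheses (hd : is_metric d) (hf : continuous_map d f).

Lemma continuous_iter k : continuous_map d (Nat.iter k f).
Proof.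
  induction k as [|k IH]; intros x eps He; simpl.
  - now exists eps.
  - destruct (hf (Nat.iter k f x) He) as [e1 [He1 H1]].
    destruct (IH x e1 He1) as [e2 [He2 H2]]. exists e2. split; auto.
Qed.

Lemma fiber_closed (g : X -> X) x : continuous_map d g -> d_closed d (fun y => g y = x).
Proof.
  intros Hg y Hy. destruct (Hg y _ (d_pos hd Hy)) as [e [He Hball]].
  exists e. split; [exact He|]. intros z Hz Hgz. specialize (Hball z Hz).
  rewrite Hgz in Hball. lra.
Qed.

Lemma outside_support_le0 v y : ~ level d v 0 y -> v y <= 0.
Proof. intros Hy. apply Rnot_lt_le. intros Hpos. apply Hy, (support_of_pos hd), Hpos. Qed.

(** The fibre of [g] meets the compact support of [v] in a compact set, on
    which the upper semicontinuous [v] attains its supremum. *)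
Lemma fiber_sup_lt (g : X -> X) v x b : continuous_map d g -> in_FX d v -> 0 < b ->
  (forall y, g y = x -> v y < b) ->
  exists b', 0 <= b' < b /\ forall y, g y = x -> v y <= b'.
Proof.
  intros Hg [Hv01 [Hvusc [Hvsupp _]]] Hb Hlt.
  destruct (classic (exists y, level d v 0 y /\ g y = x)) as [Hne|Hempty].
  - destruct (usc_attains_max Hvusc (compact_inter_closed Hvsupp (fiber_closed Hg)) Hne)
      as [m [[_ Hm] Hmax]].
    exists (v m). split; [split; [apply Hv01 | now apply Hlt]|].
    intros y Hy. destruct (classic (level d v 0 y)) as [Sy|Sy]; [now apply Hmax|].
    pose proof (outside_support_le0 Sy). pose proof (Hv01 m). unfold unitI in *. lra.
  - exists 0. split; [lra|]. intros y Hy. apply outside_support_le0.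
    intros Sy. apply Hempty. now exists y.
Qed.

Lemma iter_zadeh_unit v : (forall y, unitI (v y)) ->
  forall k x, unitI (Nat.iter k (zadeh f) v x).
Proof.
  intros Hv k. induction k as [|k IH]; intros x; [apply Hv|].
  apply zadeh_unit. exact IH.
Qed.

Lemma iter_zadeh_ge_iff v : in_FX d v -> forall k x b, 0 < b ->
  (b <= Nat.iter k (zadeh f) v x <-> exists y, Nat.iter k f y = x /\ b <= v y).
Proof.
  intros Hv k. induction k as [|k IH]; intros x b Hb; simpl.
  - split; [intros h; now exists x | now intros [y [-> h]]].
  - set (w := Nat.iter k (zadeh f) v).
    assert (Hgap : (forall z, f z = x -> w z < b) ->
                   exists b', b' < b /\ forall z, f z = x -> w z <= b').
    { intros Hlt.
      destruct (@fiber_sup_lt _ v x b (continuous_iter (S k)) Hv Hb) as [b' [Hb' Hbd]].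
      - intros y Hy. apply Rnot_le_lt. intros Hby.
        assert (b <= w (Nat.iter k f y)) by (apply IH; [exact Hb | now exists y]).
        specialize (Hlt (Nat.iter k f y) Hy). lra.
      - exists b'. split; [lra|]. intros z Hz. apply Rnot_lt_le. intros Hwz.
        destruct (proj1 (IH z (w z) ltac:(lra)) (Rle_refl _)) as [y [Hy Hvy]].
        assert (Hbv : v y <= b') by (apply Hbd; simpl; now rewrite Hy).
        lra. }
    assert (Hw : forall z, 0 <= w z <= 1) by apply (iter_zadeh_unit (proj1 Hv)).
    rewrite (zadeh_ge_iff Hw Hb Hgap). split.
    + intros [z [Hz Hbz]]. apply IH in Hbz; [|exact Hb].
      destruct Hbz as [y [<- Hy]]. now exists y.
    + intros [y [Hy Hby]]. exists (Nat.iter k f y). split; [exact Hy|].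
      apply IH; [exact Hb | now exists y].
Qed.

Lemma per_set_level v b : in_FX d v -> per_fuzzy f v -> 0 < b -> per_set f (level d v b).
Proof.
  intros Hv [p [Hp Hper]] Hb. exists p. split; [exact Hp|]. intros x.
  rewrite iter_image_iff, (level_pos_iff d v x Hb).
  transitivity (b <= Nat.iter p (zadeh f) v x); [|now rewrite Hper].
  rewrite (iter_zadeh_ge_iff Hv p x Hb).
  split; intros [y [H1 H2]]; exists y; split; try easy.
  - exact (proj1 (level_pos_iff d v y Hb) H1).
  - exact (proj2 (level_pos_iff d v y Hb) H2).
Qed.

Lemma per_fuzzy_of_levels v P : in_FX d v -> (1 <= P)%nat ->
  (forall b x, 0 < b -> (Nat.iter P (image f) (level d v b) x <-> level d v b x)) ->
  per_fuzzy f v.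
Proof.
  intros Hv HP Hlev. exists P. split; [exact HP|].
  apply nonneg_eq_of_levels.
  - intros x. apply (iter_zadeh_unit (proj1 Hv)).
  - intros x. apply (proj1 Hv).
  - intros x b Hb. rewrite (iter_zadeh_ge_iff Hv P x Hb), <- (level_pos_iff d v x Hb),
      <- (Hlev b x Hb), iter_image_iff.
    split; intros [y [H1 H2]]; exists y; split; try easy.
    + exact (proj2 (level_pos_iff d v y Hb) H2).
    + exact (proj1 (level_pos_iff d v y Hb) H1).
Qed.

End ZadehLevels.

Section StepFunctions.

Variables (X : Type) (d : X -> X -> R).
Hypothesis hd : is_metric d.
Implicit Types l : list (R * (X -> Prop)).

Definition max_step (l : list (R * (X -> Prop))) (x : X) : R :=
  fold_right (fun p acc => if excluded_middle_informative (snd p x) then Rmax (fst p) acc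
                           else acc) 0 l.

Lemma max_step_ge0 l x : 0 <= max_step l x.
Proof.
  induction l as [|p l IH]; simpl; [lra|].
  destruct excluded_middle_informative; [eapply Rle_trans; [exact IH | apply Rmax_r]|exact IH].
Qed.

Lemma max_step_ge l x p : In p l -> snd p x -> fst p <= max_step l x.
Proof.
  induction l as [|q l IH]; simpl; intros Hp Hx; [easy|].
  destruct Hp as [<- | Hp].
  - destruct excluded_middle_informative; [apply Rmax_l | easy].
  - destruct excluded_middle_informative; [|now apply IH].
    eapply Rle_trans; [now apply IH | apply Rmax_r].
Qed.

Lemma max_step_attained l x :
  max_step l x = 0 \/ exists p, In p l /\ snd p x /\ max_step l x = fst p.
Proof.
  induction l as [|q l IH]; simpl; [now left|].
  destruct excluded_middle_informative as [Hq|Hq].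
  - unfold Rmax at 1 2. destruct Rle_dec.
    + destruct IH as [IH | [p [Hp [Hpx Heq]]]]; [now left | right; exists p; auto].
    + right. exists q. auto.
  - destruct IH as [IH | [p [Hp [Hpx Heq]]]]; [now left | right; exists p; auto].
Qed.

Lemma max_step_ge_iff l x b : 0 < b ->
  (b <= max_step l x <-> exists p, In p l /\ snd p x /\ b <= fst p).
Proof.
  intros Hb. split.
  - intros Hbx. destruct (max_step_attained l x) as [H0 | [p [Hp [Hpx Heq]]]]; [lra|].
    exists p. repeat split; auto. lra.
  - intros [p [Hp [Hpx Hbp]]]. pose proof (max_step_ge Hp Hpx). lra.
Qed.

Lemma max_step_unit l x : (forall p, In p l -> unitI (fst p)) -> unitI (max_step l x).
Proof.
  intros Hl. split; [apply max_step_ge0|].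
  destruct (max_step_attained l x) as [-> | [p [Hp [_ ->]]]]; [lra | apply Hl, Hp].
Qed.

Lemma pieces_near l x : (forall p, In p l -> d_compact d (snd p)) ->
  exists e, 0 < e /\ forall y, d x y < e -> forall p, In p l -> snd p y -> snd p x.
Proof.
  induction l as [|q l IH]; intros Hc.
  - exists 1. split; [lra | easy].
  - destruct (IH (fun p Hp => Hc p (or_intror Hp))) as [e1 [He1 H1]].
    destruct (classic (snd q x)) as [Hqx|Hqx].
    + exists e1. split; [exact He1|]. intros y Hy p [<- | Hp] Hpy; [exact Hqx | eauto].
    + destruct (compact_closed hd (Hc q (or_introl eq_refl)) Hqx) as [e2 [He2 H2]].
      exists (Rmin e1 e2). split; [now apply Rmin_pos|].
      intros y Hy p [<- | Hp] Hpy.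
      * exfalso. apply (H2 y); [eapply Rlt_le_trans; [exact Hy | apply Rmin_r] | exact Hpy].
      * eapply H1; [eapply Rlt_le_trans; [exact Hy | apply Rmin_l] | exact Hp | exact Hpy].
Qed.

Lemma max_step_support l x : (forall p, In p l -> d_compact d (snd p)) ->
  (level d (max_step l) 0 x <-> exists p, In p l /\ 0 < fst p /\ snd p x).
Proof.
  intros Hc. split.
  - intros [_ Hcl]. destruct (pieces_near x Hc) as [e [He Hnear]].
    destruct (Hcl (Rle_refl 0) e He) as [y [Hy Hxy]].
    destruct (max_step_attained l y) as [H0 | [p [Hp [Hpy Heq]]]]; [lra|].
    exists p. repeat split; [exact Hp | lra | eapply Hnear; eauto].
  - intros [p [Hp [Hpos Hpx]]]. apply (support_of_pos hd).
    pose proof (max_step_ge Hp Hpx). lra.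
Qed.

Lemma max_step_in_FX l :
  (forall p, In p l -> unitI (fst p)) -> (forall p, In p l -> d_compact d (snd p)) ->
  (exists p, In p l /\ fst p = 1 /\ exists x, snd p x) -> in_FX d (max_step l).
Proof.
  intros Hunit Hc [p1 [Hp1 [Hw1 [x1 Hx1]]]]. split; [|split; [|split]].
  - intros x. now apply max_step_unit.
  - intros x r Hr. destruct (pieces_near x Hc) as [e [He Hnear]].
    exists e. split; [exact He|]. intros y Hy.
    destruct (max_step_attained l y) as [-> | [p [Hp [Hpy ->]]]].
    + pose proof (max_step_ge0 l x). lra.
    + pose proof (max_step_ge Hp (Hnear y Hy p Hp Hpy)). lra.
  - eapply compact_ext;
      [|apply (compact_list_union (Q := fun p : R * (X -> Prop) => 0 < fst p) Hc)].
    intros x. symmetry. now apply max_step_support.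
  - exists x1. apply (level_pos_iff d _ x1 Rlt_0_1), max_step_ge_iff; [lra|].
    exists p1. repeat split; auto. lra.
Qed.

Variable f : X -> X.
Hypothesis hf : continuous_map d f.

(** A common period of the pieces makes every level set of the maximum periodic. *)
Lemma max_step_periodic l : in_FX d (max_step l) ->
  (forall p, In p l -> per_set f (snd p)) -> per_fuzzy f (max_step l).
Proof.
  intros Hv Hper.
  destruct (@common_period _ f (map snd l)) as [P [HP HPer]].
  { intros L HL. apply in_map_iff in HL. destruct HL as [p [<- Hp]]. now apply Hper. }
  apply (per_fuzzy_of_levels hd hf Hv HP). intros b x Hb.
  assert (Hlev : forall y, level d (max_step l) b y <-> exists p, In p l /\ snd p y /\ b <= fst p).
  { intros y. rewrite (level_pos_iff d _ y Hb). now apply max_step_ge_iff. }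
  rewrite iter_image_iff, Hlev. split.
  - intros [y [Hy <-]]. apply Hlev in Hy. destruct Hy as [p [Hp [Hpy Hbp]]].
    exists p. repeat split; auto. apply (HPer (snd p)); [now apply in_map|].
    apply iter_image_iff. now exists y.
  - intros [p [Hp [Hpx Hbp]]].
    apply (HPer (snd p)), iter_image_iff in Hpx; [|now apply in_map].
    destruct Hpx as [y [Hpy <-]]. exists y. split; [|easy]. apply Hlev. now exists p.
Qed.

End StepFunctions.

Section LevelwiseCloseness.

Variables (X : Type) (d : X -> X -> R).
Hypothesis hd : is_metric d.

Definition levels_close (u v : X -> R) (e : R) : Prop :=
  forall a, unitI a -> mutually_close d (level d u a) (level d v a) e.

Lemma levels_close_sym u v e : levels_close u v e -> levels_close v u e.
Proof. intros H a Ha. exact (mutually_close_sym (H a Ha)). Qed.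

Lemma d_inf_le u v e : levels_close u v e -> Rbar_le (d_inf d u v) (Finite e).
Proof. intros H. apply Rbar_lub_le. intros r [a [Ha ->]]. exact (dH_le (H a Ha)). Qed.

Lemma in_T_id : in_T (fun a => a).
Proof.
  split; [auto | split; [auto|]].
  exists (fun a => a). do 3 (split; [easy|]).
  split; intros a eps _ He; exists eps; (split; [exact He | intros b _ Hb; exact Hb]).
Qed.

Lemma d_0_le u v e : 0 < e -> levels_close u v e -> Rbar_le (d_0 d u v) (Finite e).
Proof.
  intros He H. apply Rbar_glb_lb. exists e. split; [reflexivity|]. split; [exact He|].
  exists (fun a => a). split; [exact in_T_id|]. split; [|exact (d_inf_le H)].
  intros a _. rewrite Rminus_diag, Rabs_R0. lra.
Qed.

Lemma dbar_same_height x z a : dbar d (x, a) (z, a) = d x z.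
Proof.
  unfold dbar; simpl. rewrite Rminus_diag, Rabs_R0.
  apply Rmax_left, (d_nonneg hd).
Qed.

Lemma sendo_close u v e : in_FX d v -> levels_close u v e ->
  forall p, sendo d u p -> exists q, sendo d v q /\ dbar d p q <= e.
Proof.
  intros Hv H [x a] [[Ha Hax] Sx]. simpl in *.
  destruct (Rle_lt_or_eq_dec 0 a (proj1 Ha)) as [Hpos | <-].
  - destruct (proj1 (H a Ha) x (proj2 (level_pos_iff d u x Hpos) Hax)) as [z [Hz Hxz]].
    exists (z, a). rewrite dbar_same_height. split; [|exact Hxz].
    split; [split; [exact Ha|] | exact (support_of_level hd Hpos Hz)].
    exact (proj1 (level_pos_iff d v z Hpos) Hz).
  - destruct (proj1 (H 0 Ha) x Sx) as [z [Hz Hxz]].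
    exists (z, 0). rewrite dbar_same_height. split; [|exact Hxz].
    split; [split; [exact Ha | apply Hv] | exact Hz].
Qed.

Lemma endo_close u v e : in_FX d v -> 0 <= e -> levels_close u v e ->
  forall p, endo u p -> exists q, endo v q /\ dbar d p q <= e.
Proof.
  intros Hv He H [x a] [Ha Hax]. simpl in *.
  destruct (Rle_lt_or_eq_dec 0 a (proj1 Ha)) as [Hpos | <-].
  - destruct (proj1 (H a Ha) x (proj2 (level_pos_iff d u x Hpos) Hax)) as [z [Hz Hxz]].
    exists (z, a). rewrite dbar_same_height. split; [|exact Hxz].
    split; [exact Ha | exact (proj1 (level_pos_iff d v z Hpos) Hz)].
  - exists (x, 0). rewrite dbar_same_height, (d_refl hd). split; [|exact He].
    split; [exact Ha | apply Hv].
Qed.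

Lemma d_S_le u v e : in_FX d u -> in_FX d v -> levels_close u v e ->
  Rbar_le (d_S d u v) (Finite e).
Proof.
  intros Hu Hv H. apply dH_le. split.
  - exact (sendo_close Hv H).
  - intros p Hp. exact (sendo_close Hu (levels_close_sym H) Hp).
Qed.

Lemma d_E_le u v e : in_FX d u -> in_FX d v -> 0 <= e -> levels_close u v e ->
  Rbar_le (d_E d u v) (Finite e).
Proof.
  intros Hu Hv He H. apply dH_le. split.
  - exact (endo_close Hv He H).
  - intros p Hp. exact (endo_close Hu He (levels_close_sym H) Hp).
Qed.

End LevelwiseCloseness.

Section PeriodicApproximation.

Variables (X : Type) (d : X -> X -> R) (f : X -> X).
Hypotheses (hd : is_metric d) (hf : continuous_map d f) (hK : dense_per_K d f).

Definition local_piece (u : X -> R) (r : R) (c : X) (q : R * (X -> Prop)) : Prop :=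
  exists y, d c y <= r /\ (forall x, level d u 0 x -> d c x <= r -> u x <= u y) /\
    fst q = u y /\ in_KX d (snd q) /\ per_set f (snd q) /\ forall z, snd q z -> d y z <= r.

Lemma local_piece_exists u r c : in_FX d u -> 0 < r -> level d u 0 c ->
  exists q, local_piece u r c q.
Proof.
  intros [_ [Husc [Hsupp _]]] Hr Sc.
  destruct (@usc_attains_max _ d u (fun x => level d u 0 x /\ d c x <= r) Husc)
    as [y [[_ Hcy] Hmax]].
  - exact (compact_inter_closed Hsupp (closed_ball_closed hd (c:=c) (r:=r))).
  - exists c. split; [exact Sc | rewrite (d_refl hd); lra].
  - destruct (hK (singleton_in_KX d y) Hr) as [L [HL [HperL HdH]]].
    exists (u y, L), y. split; [exact Hcy|].
    split; [intros x Sx Hcx; now apply Hmax|]. do 3 (split; [easy|]).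
    intros z Lz. destruct (proj2 (dH_lt HdH) z Lz) as [a [-> Hza]].
    now rewrite (d_sym hd).
Qed.

Lemma levels_close_of_cover u (l : list (R * (X -> Prop))) r : 0 < r ->
  (forall p, In p l -> d_compact d (snd p)) ->
  (forall p, In p l -> exists y, fst p = u y /\ forall z, snd p z -> d z y <= r) ->
  (forall x, level d u 0 x -> exists p, In p l /\ u x <= fst p /\
     (exists z, snd p z) /\ forall z, snd p z -> d x z <= 3 * r) ->
  levels_close d u (max_step l) (4 * r).
Proof.
  intros Hr Hc Hsrc Hcov a Ha.
  destruct (Rle_lt_or_eq_dec 0 a (proj1 Ha)) as [Hpos | <-]; split.
  - intros x Hx. pose proof (proj1 (level_pos_iff d u x Hpos) Hx).
    destruct (Hcov x (support_of_level hd Hpos Hx)) as [p [Hp [Hup [[z Hz] Hnear]]]].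
    exists z. split; [|specialize (Hnear z Hz); lra].
    apply (level_pos_iff d _ z Hpos). pose proof (max_step_ge Hp Hz). lra.
  - intros z Hz. apply (level_pos_iff d _ z Hpos), (max_step_ge_iff _ _ Hpos) in Hz.
    destruct Hz as [p [Hp [Hpz Hap]]]. destruct (Hsrc p Hp) as [y [Hy Hnear]].
    exists y. specialize (Hnear z Hpz).
    split; [apply (level_pos_iff d u y Hpos); lra | lra].
  - intros x [_ Hcl]. destruct (Hcl (Rle_refl 0) r Hr) as [w [Hw Hxw]].
    destruct (Hcov w (support_of_pos hd Hw)) as [p [Hp [Hup [[z Hz] Hnear]]]].
    exists z. split.
    + apply (max_step_support hd z Hc). exists p. repeat split; [exact Hp | lra | exact Hz].
    + pose proof (d_triangle hd x w z). specialize (Hnear z Hz). lra.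
  - intros z Hz. apply (max_step_support hd z Hc) in Hz. destruct Hz as [p [Hp [Hpos Hpz]]].
    destruct (Hsrc p Hp) as [y [Hy Hnear]]. specialize (Hnear z Hpz).
    exists y. split; [apply (support_of_pos hd); lra | lra].
Qed.

Lemma periodic_approx u r : in_FX d u -> 0 < r ->
  exists v, in_FX d v /\ per_fuzzy f v /\ levels_close d u v (4 * r).
Proof.
  intros Hu Hr. pose proof Hu as [Hunit [_ [Hsupp [x1 Hx1]]]].
  destruct (Hsupp {c | level d u 0 c} (fun c x => d (proj1_sig c) x < r)) as [cs Hcs].
  { intros c. apply (ball_open hd). }
  { intros x Sx. exists (exist _ x Sx). simpl. now rewrite (d_refl hd). }
  destruct (choice (fun (c : {c | level d u 0 c}) q => local_piece u r (proj1_sig c) q))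
    as [g Hg].
  { intros [c Sc]. exact (local_piece_exists Hu Hr Sc). }
  set (l := map g cs).
  assert (Hl : forall p, In p l -> exists c, local_piece u r c p).
  { intros p Hp. apply in_map_iff in Hp. destruct Hp as [c [<- _]]. now exists (proj1_sig c). }
  assert (Hc : forall p, In p l -> d_compact d (snd p)).
  { intros p Hp. now destruct (Hl p Hp) as [c [y [_ [_ [_ [[_ HL] _]]]]]]. }
  assert (Hcov : forall x, level d u 0 x -> exists p, In p l /\ u x <= fst p /\
            (exists z, snd p z) /\ forall z, snd p z -> d x z <= 3 * r).
  { intros x Sx. destruct (Hcs x Sx) as [c [Hcl Hcx]].
    destruct (Hg c) as [y [Hcy [Hmax [Hw [[HLne _] [_ HLy]]]]]].
    exists (g c). split; [now apply in_map|].
    split; [rewrite Hw; apply Hmax; [exact Sx | lra]|]. split; [exact HLne|].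
    intros z Hz. specialize (HLy z Hz). pose proof (d_sym hd x (proj1_sig c)).
    pose proof (d_triangle hd x (proj1_sig c) z). pose proof (d_triangle hd (proj1_sig c) y z).
    lra. }
  assert (Hv : in_FX d (max_step l)).
  { apply (max_step_in_FX hd); [|exact Hc|].
    - intros p Hp. destruct (Hl p Hp) as [c [y [_ [_ [-> _]]]]]. apply Hunit.
    - destruct (Hcov x1 (support_of_level hd Rlt_0_1 Hx1)) as [p [Hp [Hup [Hne _]]]].
      exists p. split; [exact Hp|]. split; [|exact Hne].
      apply (level_pos_iff d u x1 Rlt_0_1) in Hx1.
      destruct (Hl p Hp) as [c [y [_ [_ [Hw _]]]]].
      pose proof (Hunit y). unfold unitI in *. lra. }
  exists (max_step l). split; [exact Hv|]. split.
  - apply (max_step_periodic hd hf Hv). intros p Hp.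
    now destruct (Hl p Hp) as [c [y [_ [_ [_ [_ [Hper _]]]]]]].
  - apply (levels_close_of_cover Hr Hc); [|exact Hcov].
    intros p Hp. destruct (Hl p Hp) as [c [y [_ [_ [Hw [_ [_ HLy]]]]]]].
    exists y. split; [exact Hw|]. intros z Hz. rewrite (d_sym hd). exact (HLy z Hz).
Qed.

Lemma dense_per_F_of_dense_per_K (rho : (X -> R) -> (X -> R) -> Rbar) :
  (forall u v e, in_FX d u -> in_FX d v -> 0 < e -> levels_close d u v e ->
     Rbar_le (rho u v) (Finite e)) ->
  dense_per_F d f rho.
Proof.
  intros Hrho u Hu eps He.
  destruct (@periodic_approx u (eps / 5) Hu ltac:(lra)) as [v [Hv [Hper Hclose]]].
  exists v. split; [exact Hv|]. split; [exact Hper|].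
  apply Rbar_le_lt_trans with (Finite (4 * (eps / 5))); [|simpl; lra].
  apply (Hrho u v _ Hu Hv); [lra | exact Hclose].
Qed.

End PeriodicApproximation.

Section IndicatorApproximation.

Variables (X : Type) (d : X -> X -> R) (f : X -> X).
Hypotheses (hd : is_metric d) (hf : continuous_map d f).

Definition chi (K : X -> Prop) (x : X) : R :=
  if excluded_middle_informative (K x) then 1 else 0.

Lemma chi_pos_iff K x : 0 < chi K x <-> K x.
Proof. unfold chi. destruct excluded_middle_informative; split; easy || lra. Qed.

Lemma chi_one K x : K x -> chi K x = 1.
Proof. unfold chi. now destruct excluded_middle_informative. Qed.

Lemma level_chi_one K : level d (chi K) 1 = K.
Proof.
  apply functional_extensionality. intros x. apply propositional_extensionality.
  rewrite (level_pos_iff d _ x Rlt_0_1). unfold chi.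
  destruct excluded_middle_informative; split; easy || lra.
Qed.

Lemma support_chi K x : d_closed d K -> (level d (chi K) 0 x <-> K x).
Proof.
  intros HK. split.
  - intros [_ Hcl]. apply NNPP. intros Kx. destruct (HK x Kx) as [e [He Hball]].
    destruct (Hcl (Rle_refl 0) e He) as [y [Hy Hxy]].
    exact (Hball y Hxy (proj1 (chi_pos_iff K y) Hy)).
  - intros Kx. apply (support_of_pos hd), chi_pos_iff, Kx.
Qed.

Lemma chi_in_FX K : in_KX d K -> in_FX d (chi K).
Proof.
  intros [[x0 Kx0] HK]. pose proof (compact_closed hd HK) as Hcl.
  split; [|split; [|split]].
  - intros x. unfold chi, unitI. destruct excluded_middle_informative; lra.
  - intros x r Hr. unfold chi in Hr. destruct excluded_middle_informative as [Kx|Kx].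
    + exists 1. split; [lra|]. intros y _. unfold chi. destruct excluded_middle_informative; lra.
    + destruct (Hcl x Kx) as [e [He Hball]]. exists e. split; [exact He|].
      intros y Hy. unfold chi. destruct excluded_middle_informative as [Ky|Ky]; [|lra].
      exfalso. exact (Hball y Hy Ky).
  - eapply compact_ext; [|exact HK]. intros x. symmetry. now apply support_chi.
  - exists x0. now rewrite level_chi_one.
Qed.

Lemma level_in_KX v b : in_FX d v -> 0 < b <= 1 -> in_KX d (level d v b).
Proof.
  intros [_ [Husc [Hsupp [x1 Hx1]]]] Hb. split.
  - exists x1. apply (level_pos_iff d v x1 Rlt_0_1) in Hx1. apply level_pos_iff; lra.
  - eapply compact_ext; [|apply (compact_inter_closed Hsupp (F := level d v b))].
    + intros x. split; [now intros [_ Hx] | intros Hx; split; [|exact Hx]].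
      apply (support_of_level hd (proj1 Hb) Hx).
    + intros y Hy. assert (Hlt : v y < b).
      { apply Rnot_le_lt. intros Hby. now apply Hy, level_pos_iff. }
      destruct (Husc y b Hlt) as [e [He Hball]]. exists e. split; [exact He|].
      intros z Hz Hbz. apply (level_pos_iff d v z (proj1 Hb)) in Hbz.
      specialize (Hball z Hz). lra.
Qed.

Lemma dense_per_K_of_dense_per_F (rho : (X -> R) -> (X -> R) -> Rbar) :
  (forall K eps, in_KX d K -> 0 < eps -> exists delta, 0 < delta /\
     forall v, in_FX d v -> Rbar_lt (rho (chi K) v) (Finite delta) ->
     exists b, 0 < b <= 1 /\ mutually_close d K (level d v b) eps) ->
  dense_per_F d f rho -> dense_per_K d f.
Proof.
  intros Hrec HF K HK eps He.
  destruct (Hrec K (eps / 2) HK ltac:(lra)) as [delta [Hdelta Hlev]].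
  destruct (HF (chi K) (chi_in_FX HK) delta Hdelta) as [v [Hv [Hper Hrho]]].
  destruct (Hlev v Hv Hrho) as [b [Hb Hclose]].
  exists (level d v b). split; [now apply level_in_KX|].
  split; [exact (per_set_level hd hf Hv Hper (proj1 Hb))|].
  eapply Rbar_le_lt_trans; [exact (dH_le Hclose) | simpl; lra].
Qed.

Lemma d_inf_chi_close K v e :
  Rbar_lt (d_inf d (chi K) v) (Finite e) -> mutually_close d K (level d v 1) e.
Proof.
  intros H. rewrite <- (level_chi_one K). apply dH_lt.
  eapply Rbar_le_lt_trans; [|exact H]. apply Rbar_lub_ub.
  exists 1. split; [split; lra | reflexivity].
Qed.

Lemma in_T_ge1_iff xi a : in_T xi -> unitI a -> (1 <= xi a <-> 1 <= a).
Proof.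
  intros [Hmono [Hunit [g [Hg [_ [Hxig _]]]]]] Ha.
  assert (U1 : unitI 1) by (split; lra).
  assert (Hxi1 : xi 1 = 1).
  { destruct (Rle_lt_or_eq_dec _ _ (proj2 (Hg 1 U1))) as [Hlt | Heq].
    - pose proof (Hmono _ _ (Hg 1 U1) U1 Hlt). rewrite (Hxig 1 U1) in *.
      pose proof (Hunit 1 U1). unfold unitI in *. lra.
    - rewrite <- Heq at 1. exact (Hxig 1 U1). }
  destruct (Rle_lt_or_eq_dec _ _ (proj2 Ha)) as [Hlt | ->].
  - pose proof (Hmono _ _ Ha U1 Hlt). lra.
  - rewrite Hxi1. lra.
Qed.

Lemma d_0_chi_close K v e : in_FX d v ->
  Rbar_lt (d_0 d (chi K) v) (Finite e) -> mutually_close d K (level d v 1) e.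
Proof.
  intros Hv H. destruct (Rbar_glb_lt H) as [r [[eps0 [-> [_ [xi [Hxi [_ Hd]]]]]] Hlt]].
  assert (Hlev : level d (fun x => xi (v x)) 1 = level d v 1).
  { apply functional_extensionality. intros x. apply propositional_extensionality.
    rewrite !(level_pos_iff d _ x Rlt_0_1). apply in_T_ge1_iff; [exact Hxi | apply Hv]. }
  rewrite <- Hlev. apply d_inf_chi_close. exact (Rbar_le_lt_trans _ _ _ Hd Hlt).
Qed.

Lemma dbar_le_inv p q e : dbar d p q <= e ->
  d (fst p) (fst q) <= e /\ Rabs (snd p - snd q) <= e.
Proof.
  unfold dbar. intros H. split; eapply Rle_trans; [apply Rmax_l | exact H | apply Rmax_r | exact H].
Qed.

(** [1/4] is below the gaps [1 - 1/2] and [1/2 - 0] between the heights used. *)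
Lemma endo_near_top v x z c e : e <= 1/4 -> endo v (z, c) -> dbar d (x, 1) (z, c) <= e ->
  level d v (1/2) z /\ d x z <= e.
Proof.
  intros He [_ Hc] Hd. destruct (dbar_le_inv Hd) as [Hxz Hh]. simpl in *.
  apply Rabs_le_between in Hh. split; [apply level_pos_iff; lra | exact Hxz].
Qed.

Lemma endo_chi_near_half K z x c e : e <= 1/4 -> endo (chi K) (x, c) ->
  dbar d (z, 1/2) (x, c) <= e -> K x /\ d z x <= e.
Proof.
  intros He [_ Hc] Hd. destruct (dbar_le_inv Hd) as [Hzx Hh]. simpl in *.
  apply Rabs_le_between in Hh. split; [apply chi_pos_iff; lra | exact Hzx].
Qed.

Lemma d_S_chi_close K v e : e <= 1/4 -> in_FX d v ->
  Rbar_lt (d_S d (chi K) v) (Finite e) -> mutually_close d K (level d v (1/2)) e.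
Proof.
  intros He Hv H. destruct (dH_lt H) as [Hto Hfrom]. split.
  - intros x Kx. destruct (Hto (x, 1)) as [[z c] [[Hzc _] Hd]].
    + split; [split; [split; simpl; lra | simpl; rewrite (chi_one Kx); lra] |].
      apply (support_of_pos hd), chi_pos_iff, Kx.
    + exists z. exact (endo_near_top He Hzc Hd).
  - intros z Hz. destruct (Hfrom (z, 1/2)) as [[x c] [[Hxc _] Hd]].
    + assert (Hhalf : 0 < 1/2) by lra.
      split; [split; [split; simpl; lra | exact (proj1 (level_pos_iff d v z Hhalf) Hz)] |].
      exact (support_of_level hd Hhalf Hz).
    + exists x. exact (endo_chi_near_half He Hxc Hd).
Qed.

Lemma d_E_chi_close K v e : e <= 1/4 ->
  Rbar_lt (d_E d (chi K) v) (Finite e) -> mutually_close d K (level d v (1/2)) e.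
Proof.
  intros He H. destruct (dH_lt H) as [Hto Hfrom]. split.
  - intros x Kx. destruct (Hto (x, 1)) as [[z c] [Hzc Hd]].
    + split; [split; simpl; lra | simpl; rewrite (chi_one Kx); lra].
    + exists z. exact (endo_near_top He Hzc Hd).
  - intros z Hz. destruct (Hfrom (z, 1/2)) as [[x c] [Hxc Hd]].
    + assert (Hhalf : 0 < 1/2) by lra.
      split; [split; simpl; lra | exact (proj1 (level_pos_iff d v z Hhalf) Hz)].
    + exists x. exact (endo_chi_near_half He Hxc Hd).
Qed.

Lemma dense_per_K_iff_d_inf : dense_per_K d f <-> dense_per_F d f (d_inf d).
Proof.
  split.
  - intros hK. apply (dense_per_F_of_dense_per_K hd hf hK).
    intros u v e _ _ _. apply d_inf_le.
  - apply dense_per_K_of_dense_per_F. intros K eps _ He. exists eps. split; [exact He|].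
    intros v _ H. exists 1. split; [lra | exact (d_inf_chi_close H)].
Qed.

Lemma dense_per_K_iff_d_0 : dense_per_K d f <-> dense_per_F d f (d_0 d).
Proof.
  split.
  - intros hK. apply (dense_per_F_of_dense_per_K hd hf hK).
    intros u v e _ _ He. now apply d_0_le.
  - apply dense_per_K_of_dense_per_F. intros K eps _ He. exists eps. split; [exact He|].
    intros v Hv H. exists 1. split; [lra | exact (d_0_chi_close Hv H)].
Qed.

Lemma dense_per_K_iff_d_S : dense_per_K d f <-> dense_per_F d f (d_S d).
Proof.
  split.
  - intros hK. apply (dense_per_F_of_dense_per_K hd hf hK).
    intros u v e Hu Hv _. now apply (d_S_le hd).
  - apply dense_per_K_of_dense_per_F. intros K eps _ He.
    exists (Rmin eps (1/4)). split; [apply Rmin_pos; lra|].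
    intros v Hv H. exists (1/2). split; [lra|].
    exact (mutually_close_mono (Rmin_l _ _) (d_S_chi_close (Rmin_r _ _) Hv H)).
Qed.


Lemma dense_per_K_iff_d_E : dense_per_K d f <-> dense_per_F d f (d_E d).
Proof.
  split.
  - intros hK. apply (dense_per_F_of_dense_per_K hd hf hK).
    intros u v e Hu Hv He. apply (d_E_le hd); auto; lra.
  - apply dense_per_K_of_dense_per_F. intros K eps _ He.
    exists (Rmin eps (1/4)). split; [apply Rmin_pos; lra|].
    intros v _ H. exists (1/2). split; [lra|].
    exact (mutually_close_mono (Rmin_l _ _) (d_E_chi_close (Rmin_r _ _) H)).
Qed.

End IndicatorApproximation.

Theorem lemma4p1 (X : Type) (d : X -> X -> R) (f : X -> X)
  (hd : is_metric d) (hf : continuous_map d f) :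
  (dense_per_K d f <-> dense_per_F d f (d_inf d)) /\
  (dense_per_K d f <-> dense_per_F d f (d_0 d)) /\
  (dense_per_K d f <-> dense_per_F d f (d_S d)) /\
  (dense_per_K d f <-> dense_per_F d f (d_E d)).
Proof.
  split; [|split; [|split]].
  - exact (dense_per_K_iff_d_inf hd hf).
  - exact (dense_per_K_iff_d_0 hd hf).
  - exact (dense_per_K_iff_d_S hd hf).
  - exact (dense_per_K_iff_d_E hd hf).
Qed.
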